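(* Let $m,n\ge 2$ be integers with $n/m$ a positive integer, and suppose there exists a generalized quadrangle $\mathcal{G}$ of order $(m,n)$ which contains a subquadrangle $\mathcal{G}'$ of order $(m,n/m)$. Then there exists an $(m,n+1;8)$-bipartite biregular graph of order $(m+n+1)\frac{m^2-1}{m}n$.
   Context: A generalized quadrangle is a finite point-line incidence geometry whose incidence (Levi) graph — the bipartite graph on points and lines with a point adjacent to a line iff incident — is connected, of diameter 4 and girth 8. It has order $(s,t)$ if each line has exactly $s+1$ points and each point lies on exactly $t+1$ lines. A subquadrangle of $\mathcal{G}$ is a generalized quadrangle whose points and lines are subsets of those of $\mathcal{G}$ with the inherited incidence. For integers $a,b\geq 2$ and even $g\ge4$, an $(a,b;g)$-bipartite biregular graph is a finite simple bipartite graph of girth exactly $g$ in which all vertices of one bipartition class have degree $a$ and all vertices of the other class have degree $b$. *)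

From mathcomp Require Import all_boot.
Set Implicit Arguments. Unset Strict Implicit. Unset Printing Implicit Defensive.

Section Graph.
Variable V : finType.
Variable e : rel V.

Definition conn_le (D : {set V}) (x y : V) (k : nat) : Prop :=
  exists s : seq V, [/\ size s <= k, path e x s, last x s = y
                       & all (fun v => v \in D) (x :: s)].

Definition connected_on (D : {set V}) : Prop :=
  forall x y, x \in D -> y \in D -> exists k, conn_le D x y k.

Definition diameter_eq (D : {set V}) (d : nat) : Prop :=
  (forall x y, x \in D -> y \in D -> conn_le D x y d) /\
  (exists x y, [/\ x \in D, y \in D & ~ conn_le D x y d.-1]).

Definition is_cycle_in (D : {set V}) (c : seq V) : Prop :=
  [/\ 3 <= size c, uniq c, cycle e c & all (fun v => v \in D) c].

Definition girth_eq (D : {set V}) (g : nat) : Prop :=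
  (exists c, is_cycle_in D c /\ size c = g) /\
  (forall c, is_cycle_in D c -> g <= size c).

Definition simple_graph : Prop := symmetric e /\ irreflexive e.

Definition deg (x : V) : nat := #|[set y | e x y]|.
End Graph.

Definition bipartite_biregular (V : finType) (e : rel V) (A : {set V})
    (a b g : nat) : Prop :=
  [/\ simple_graph e,
      (forall x y, e x y -> (x \in A) != (y \in A)),
      (forall x, x \in A -> deg e x = a),
      (forall x, x \notin A -> deg e x = b)
    & girth_eq e [set: V] g].

Section Geometry.
Variables (P L : finType) (I : P -> L -> bool).

Definition levi : rel (P + L) := fun u v =>
  match u, v with
  | inl p, inr l => I p l
  | inr l, inl p => I p l
  | _, _ => false
  end.

Definition levi_verts (SP : {set P}) (SL : {set L}) : {set P + L} :=
  (inl @: SP) :|: (inr @: SL).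

Definition gq_on (SP : {set P}) (SL : {set L}) : Prop :=
  let D := levi_verts SP SL in
  [/\ connected_on levi D, diameter_eq levi D 4 & girth_eq levi D 8].

Definition gq_order_on (SP : {set P}) (SL : {set L}) (s t : nat) : Prop :=
  [/\ gq_on SP SL,
      (forall l, l \in SL -> #|[set p in SP | I p l]| = s.+1)
    & (forall p, p \in SP -> #|[set l in SL | I p l]| = t.+1)].

Definition gq_order (s t : nat) : Prop := gq_order_on [set: P] [set: L] s t.
End Geometry.

From mathcomp Require Import all_boot zify.
Set Implicit Arguments. Unset Strict Implicit. Unset Printing Implicit Defensive.

(* Delete from the Levi graph of the quadrangle (order (s,t), t = s t') all points and
   lines of the subquadrangle. A line of the subquadrangle has all its s + 1 points there,
   so every remaining point keeps its t + 1 lines. Double counting shows that every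
   remaining line meets the subquadrangle, and by the absence of triangles in exactly one
   point, so it keeps s points. The girth stays at least 8, and an octagon survives:
   through two collinear points z, z' of the subquadrangle take external lines l, l';
   they are disjoint, and projecting two external points of l onto l' closes an 8-cycle
   of external elements. Finally a quadrangle of order (s,t) has (s+1)(st+1) points and
   (t+1)(st+1) lines, which gives the order of the graph. *)

Lemma double_count (X Y : finType) (R : X -> Y -> bool) (A : {set X}) (B : {set Y}) :
  \sum_(x in A) #|[set y in B | R x y]| = \sum_(y in B) #|[set x in A | R x y]|.
Proof.
have card_sel (Z : finType) (C : {set Z}) (Q : pred Z) :
    #|[set z in C | Q z]| = \sum_(z in C) Q z.
  rewrite -sum1_card big_mkcond [RHS]big_mkcond /=.
  by apply: eq_bigr => z _; rewrite inE; case: (z \in C); case: (Q z).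
under eq_bigr do rewrite card_sel.
under [RHS]eq_bigr do rewrite card_sel.
exact: exchange_big.
Qed.

Section Levi.
Variables (P L : finType) (I : P -> L -> bool).

Definition is_line (u : P + L) : bool := if u is inr _ then true else false.

Lemma mem_levi_verts_inl (SP : {set P}) (SL : {set L}) p :
  (inl p \in levi_verts SP SL) = (p \in SP).
Proof.
by rewrite inE (mem_imset _ _ inl_inj); case: imsetP => [[? _ //] | _]; rewrite ?orbF.
Qed.

Lemma mem_levi_verts_inr (SP : {set P}) (SL : {set L}) l :
  (inr l \in levi_verts SP SL) = (l \in SL).
Proof.
by rewrite inE (mem_imset _ _ inr_inj); case: imsetP => [[? _ //] | _]; rewrite ?orbF.
Qed.

Definition mem_levi_verts := (mem_levi_verts_inl, mem_levi_verts_inr).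

Lemma levi_vertsTT : levi_verts [set: P] [set: L] = [set: P + L].
Proof. by apply/setP => -[p|l]; rewrite mem_levi_verts !in_setT. Qed.

Lemma card_levi_verts (SP : {set P}) (SL : {set L}) :
  #|levi_verts SP SL| = #|SP| + #|SL|.
Proof.
rewrite cardsU !card_imset; [|exact: inr_inj|exact: inl_inj].
suff -> : inl @: SP :&: inr @: SL = set0 by rewrite cards0 subn0.
apply/setP => u; rewrite in_setI in_set0.
by apply/andP => -[/imsetP[p _ ->] /imsetP[? _ //]].
Qed.

Lemma card_levi_nbhd_inl (SP : {set P}) (SL : {set L}) p :
  #|[set v in levi_verts SP SL | levi I (inl p) v]| = #|[set l in SL | I p l]|.
Proof.
rewrite -(card_imset [set l in SL | I p l] (@inr_inj P L)); apply: eq_card => -[q|l].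
  by rewrite !inE andbF; apply/esym/imsetP => -[? _ //].
by rewrite (mem_imset _ _ inr_inj) in_set mem_levi_verts !inE.
Qed.

Lemma card_levi_nbhd_inr (SP : {set P}) (SL : {set L}) l :
  #|[set v in levi_verts SP SL | levi I (inr l) v]| = #|[set p in SP | I p l]|.
Proof.
rewrite -(card_imset [set p in SP | I p l] (@inl_inj P L)); apply: eq_card => -[p|m].
  by rewrite (mem_imset _ _ inl_inj) in_set mem_levi_verts !inE.
by rewrite !inE andbF; apply/esym/imsetP => -[? _ //].
Qed.

End Levi.

Section Induced.
Variables (T : finType) (e : rel T) (D : {set T}).

Definition induced : rel {x : T | x \in D} := fun x y => e (val x) (val y).

Lemma induced_simple : simple_graph e -> simple_graph induced.
Proof. by case=> e_sym e_irr; split=> [x y | x]; [apply: e_sym | apply: e_irr]. Qed.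

Lemma deg_induced x : deg induced x = #|[set y in D | e (val x) y]|.
Proof.
rewrite /deg -(card_imset _ val_inj); apply: eq_card => y; rewrite !inE.
apply/imsetP/andP => [[z] | [yD xy]]; first by rewrite inE => xz ->; rewrite (valP z).
by exists (Sub y yD); rewrite ?inE /induced SubK.
Qed.

Lemma induced_cycleE c :
  is_cycle_in induced [set: _] c <-> is_cycle_in e D (map val c).
Proof.
rewrite /is_cycle_in size_map (map_inj_uniq val_inj) cycle_map.
have -> : all (fun v => v \in D) (map val c).
  by apply/allP => _ /mapP[x _ ->]; apply: valP.
by have -> : all (fun v => v \in [set: _]) c by apply/allP => x _; apply: in_setT.
Qed.

Lemma girth_induced g : girth_eq e D g -> girth_eq induced [set: _] g.
Proof.
case=> [[c [cyc <-]] ge_g]; split=> [|c' /induced_cycleE/ge_g]; last by rewrite size_map.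
have val_lift : map val (pmap insub c : seq {x | x \in D}) = c.
  rewrite (pmap_filter (@insubK _ _ _)); apply/all_filterP.
  by case: cyc => _ _ _; apply: sub_all => x; rewrite isSome_insub.
exists (pmap insub c); split; first by rewrite induced_cycleE val_lift.
by rewrite -[in RHS]val_lift size_map.
Qed.

End Induced.

Arguments induced {T} e D.

Section Quadrangle.
Variables (P L : finType) (I : P -> L -> bool) (SP : {set P}) (SL : {set L}).
Hypothesis gq : gq_on I SP SL.

Lemma gq_cycle_ge8 c : is_cycle_in (levi I) (levi_verts SP SL) c -> 8 <= size c.
Proof. by case: gq => _ _ [_]; apply. Qed.

Lemma gq_line_unique a b l1 l2 :
    a \in SP -> b \in SP -> l1 \in SL -> l2 \in SL -> a != b ->
  I a l1 -> I b l1 -> I a l2 -> I b l2 -> l1 = l2.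
Proof.
move=> aS bS l1S l2S ab al1 bl1 al2 bl2; apply/eqP; apply: contraT => l12.
suff : 8 <= 4 by [].
apply: (gq_cycle_ge8 (c := [:: inl a; inr l1; inl b; inr l2])); split => //=.
- by rewrite !inE -!sum_eqE /= orbF ab l12.
- by rewrite al1 bl1 bl2 al2.
- by rewrite !mem_levi_verts aS bS l1S l2S.
Qed.

Lemma gq_proj_unique x y1 y2 h1 h2 l :
    x \in SP -> y1 \in SP -> y2 \in SP -> h1 \in SL -> h2 \in SL -> l \in SL ->
    ~~ I x l -> I x h1 -> I y1 h1 -> I y1 l -> I x h2 -> I y2 h2 -> I y2 l ->
  y1 = y2.
Proof.
move=> xS y1S y2S h1S h2S lS xl xh1 y1h1 y1l xh2 y2h2 y2l.
apply/eqP; apply: contraT => y12.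
have [eq_h12|h12] := eqVneq h1 h2.
  have h1l : h1 = l by apply: (gq_line_unique y1S y2S h1S lS y12 y1h1) => //; rewrite eq_h12.
  by rewrite -h1l xh1 in xl.
have xy1 : x != y1 by apply: contraNneq xl => ->.
have xy2 : x != y2 by apply: contraNneq xl => ->.
have h1l : h1 != l by apply: contraNneq xl => <-.
have h2l : h2 != l by apply: contraNneq xl => <-.
suff : 8 <= 6 by [].
apply: (gq_cycle_ge8 (c := [:: inl x; inr h1; inl y1; inr l; inl y2; inr h2])).
split => //=.
- by rewrite !inE -!sum_eqE /= ?orbF ?orFb !negb_or xy1 xy2 h1l h12 y12 (eq_sym l) h2l.
- by rewrite xh1 y1h1 y1l y2l y2h2 xh2.
- by rewrite !mem_levi_verts xS y1S y2S h1S lS h2S.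
Qed.

Lemma gq_proj_exists x l : x \in SP -> l \in SL -> ~~ I x l ->
  exists y h, [/\ y \in SP, h \in SL, I y l, I x h & I y h].
Proof.
move=> xS lS xl; case: gq => _ [diam _] _.
have [s [size_s walk last_s in_s]] : conn_le (levi I) (levi_verts SP SL) (inl x) (inr l) 4.
  by apply: diam; rewrite mem_levi_verts.
case: s size_s walk last_s in_s => [|u [|v [|w [|a [|? ?]]]]] //= _.
- by case: u => // l' /andP[xl' _] [eq_l]; rewrite -eq_l xl' in xl.
- by case: u v => [?|?] [?|?]; rewrite ?andbF.
- case: u v w => [?|h] [y|?] [?|l'] //; rewrite ?andbF //.
  case/and4P => xh hy yl' _ [<-] /and4P[_]; rewrite !mem_levi_verts => hS yS _.
  by exists y, h.
- by case: u v w a => [?|?] [?|?] [?|?] [?|?]; rewrite ?andbF.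
Qed.

End Quadrangle.

Definition lines_meeting (P L : finType) (I : P -> L -> bool) (SP : {set P}) (SL : {set L})
    (g : L) : {set L} :=
  [set h in SL | (h != g) && [exists q in SP, I q g && I q h]].

Section QuadrangleOrder.
Variables (P L : finType) (I : P -> L -> bool) (SP : {set P}) (SL : {set L}) (s t : nat).
Hypothesis gqo : gq_order_on I SP SL s t.

Let gq : gq_on I SP SL. Proof. by case: gqo. Qed.
Let line_size l : l \in SL -> #|[set p in SP | I p l]| = s.+1.
Proof. by case: gqo => _ + _; apply. Qed.
Let point_deg p : p \in SP -> #|[set l in SL | I p l]| = t.+1.
Proof. by case: gqo => _ _; apply. Qed.

Lemma card_lines_meeting g : g \in SL -> #|lines_meeting I SP SL g| = s.+1 * t.
Proof.
move=> gS; set M := lines_meeting I SP SL g.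
have := double_count I [set q in SP | I q g] M.
rewrite (eq_bigr (fun=> t)); last first.
  move=> x; rewrite inE => /andP[xS xg].
  have -> : [set h in M | I x h] = [set l in SL | I x l] :\ g.
    apply/setP => h; rewrite !inE; apply/idP/idP => [/andP[/and3P[-> -> _] ->] // |].
    case/and3P => hg hS xh; rewrite hS hg xh /= andbT.
    by apply/exists_inP; exists x; rewrite ?xg.
  by move: (point_deg xS); rewrite (cardsD1 g) !inE gS xg add1n => -[].
rewrite [RHS](eq_bigr (fun=> 1)); last first.
  move=> h; rewrite inE => /and3P[hS hg /exists_inP[q qS /andP[qg qh]]].
  apply/eqP/cards1P; exists q; apply/setP => x; rewrite !inE.
  apply/idP/eqP => [/andP[/andP[xS xg] xh] | ->]; last by rewrite qS qg qh.
  apply: contraTeq hg => xq; rewrite negbK; apply/eqP.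
  exact: (gq_line_unique gq xS qS hS gS xq xh qh xg qg).
by rewrite !sum_nat_const muln1 line_size.
Qed.

Lemma gq_line_exists : exists g, g \in SL.
Proof.
case: gq => _ [_ [[p|l] [_ [pD _ _]]]] _; rewrite mem_levi_verts in pD; last by exists l.
have /card_gt0P[l] : 0 < #|[set l in SL | I p l]| by rewrite point_deg.
by rewrite inE => /andP[lS _]; exists l.
Qed.

Lemma card_gq_points : #|SP| = s.+1 * (s * t).+1.
Proof.
have [g gS] := gq_line_exists.
set Pg := [set q in SP | I q g]; set M := lines_meeting I SP SL g.
(* A point off g lies on exactly one line meeting g; such a line has s points off g. *)
have off_g : #|SP :\: Pg| = #|M| * s.
  have := double_count I (SP :\: Pg) M.
  rewrite (eq_bigr (fun=> 1)); last first.
    move=> r; rewrite !inE => /andP[rg rS]; rewrite rS /= in rg.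
    have [q [h [qS hS qg rh qh]]] := gq_proj_exists gq rS gS rg.
    have rq : r != q by apply: contraNneq rg => ->.
    apply/eqP/cards1P; exists h; apply/setP => h'; rewrite !inE.
    apply/idP/eqP => [/andP[/and3P[h'S _ /exists_inP[q' q'S /andP[q'g q'h']]] rh'] | ->].
      have qq' := gq_proj_unique gq rS qS q'S hS h'S gS rg rh qh qg rh' q'h' q'g.
      by apply: (gq_line_unique gq rS qS h'S hS rq rh') => //; rewrite qq'.
    rewrite hS rh andbT /=; apply/andP; split; first by apply: contraNneq rg => <-.
    by apply/exists_inP; exists q; rewrite ?qg.
  rewrite [RHS](eq_bigr (fun=> s)); last first.
    move=> h; rewrite inE => /and3P[hS hg /exists_inP[q qS /andP[qg qh]]].
    have -> : [set x in SP :\: Pg | I x h] = [set x in SP | I x h] :\ q.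
      apply/setP => x; rewrite !inE; case: (boolP (x \in SP)) => xS; rewrite ?andbF //=.
      case: (boolP (I x h)) => xh; rewrite ?andbF //= !andbT.
      apply/idP/idP => [|xq]; first by apply: contraNneq => ->.
      apply: contra hg => xg; apply/eqP.
      exact: (gq_line_unique gq xS qS hS gS xq xh qh xg qg).
    by move: (line_size hS); rewrite (cardsD1 q) !inE qS qh add1n => -[].
  by rewrite !sum_nat_const muln1 => ->.
have on_g : #|SP :&: Pg| = s.+1.
  by rewrite (setIidPr _) ?line_size //; apply/subsetP => x; rewrite inE => /andP[].
by rewrite -(cardsID Pg SP) on_g off_g card_lines_meeting //; nia.
Qed.

Lemma card_gq_lines : #|SL| = t.+1 * (s * t).+1.
Proof.
have := double_count I SP SL.
rewrite (eq_bigr (fun=> t.+1)) => [|x /point_deg //].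
rewrite [RHS](eq_bigr (fun=> s.+1)) => [|l /line_size //].
rewrite !sum_nat_const card_gq_points => E.
by apply/eqP; rewrite -(eqn_pmul2r (ltn0Sn s)) -E; apply/eqP; nia.
Qed.

End QuadrangleOrder.

Section Subquadrangle.
Variables (P L : finType) (I : P -> L -> bool) (s t t' : nat) (SP : {set P}) (SL : {set L}).
Hypotheses (gqI : gq_order I s t) (gqS : gq_order_on I SP SL s t').

Let gqT : gq_on I [set: P] [set: L]. Proof. by case: gqI. Qed.
Let gq_sub : gq_on I SP SL. Proof. by case: gqS. Qed.
Let line_size l : #|[set p in [set: P] | I p l]| = s.+1.
Proof. by case: gqI => _ + _; apply. Qed.
Let point_deg p : #|[set l in [set: L] | I p l]| = t.+1.
Proof. by case: gqI => _ _; apply. Qed.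
Let sub_line_size l : l \in SL -> #|[set p in SP | I p l]| = s.+1.
Proof. by case: gqS => _ + _; apply. Qed.
Let sub_point_deg p : p \in SP -> #|[set l in SL | I p l]| = t'.+1.
Proof. by case: gqS => _ _; apply. Qed.

Let line_unique a b l1 l2 : a != b -> I a l1 -> I b l1 -> I a l2 -> I b l2 -> l1 = l2.
Proof. exact: (gq_line_unique gqT (in_setT a) (in_setT b) (in_setT l1) (in_setT l2)). Qed.

Let proj_unique x y1 y2 h1 h2 l :
  ~~ I x l -> I x h1 -> I y1 h1 -> I y1 l -> I x h2 -> I y2 h2 -> I y2 l -> y1 = y2.
Proof.
exact: (gq_proj_unique gqT (in_setT x) (in_setT y1) (in_setT y2) (in_setT h1) (in_setT h2)
  (in_setT l)).
Qed.

Let proj_exists x l : ~~ I x l -> exists y h, [/\ I y l, I x h & I y h].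
Proof.
by move/(gq_proj_exists gqT (in_setT x) (in_setT l)) => [y [h [_ _ ? ? ?]]]; exists y, h.
Qed.

Lemma gq_octagon l l' x1 x2 y1 y2 h1 h2 :
    (forall w, I w l -> ~~ I w l') -> x1 != x2 -> I x1 l -> I x2 l -> I y1 l' -> I y2 l' ->
    I x1 h1 -> I y1 h1 -> I x2 h2 -> I y2 h2 ->
  let c := [:: inl x1; inr l; inl x2; inr h2; inl y2; inr l'; inl y1; inr h1] in
  uniq c && cycle (levi I) c.
Proof.
move=> disj x12 x1l x2l y1l' y2l' x1h1 y1h1 x2h2 y2h2.
have xy x y : I x l -> I y l' -> x != y.
  by move=> xl yl'; apply: contraTneq yl' => <-; apply: disj.
have y1l : ~~ I y1 l by apply: contraL y1l'; apply: disj.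
have ll' : l != l' by apply: contraNneq (disj _ x1l) => <-.
have h1l : h1 != l by apply: contraNneq y1l => <-.
have h2l : h2 != l by apply: contraNneq (contraL (disj y2) y2l') => <-.
have h1l' : h1 != l' by apply: contraNneq (disj _ x1l) => <-.
have h2l' : h2 != l' by apply: contraNneq (disj _ x2l) => <-.
have h12 : h1 != h2.
  apply: contraNneq h1l => h12; apply/eqP.
  by apply: (line_unique x12 x1h1 _ x1l x2l); rewrite h12.
have y12 : y1 != y2.
  apply: contraNneq x12 => y12; apply/eqP.
  by apply: (proj_unique y1l y1h1 x1h1 x1l _ x2h2 x2l); rewrite y12.
rewrite /= x1l x2l x2h2 y2h2 y2l' y1l' y1h1 x1h1 !inE -!sum_eqE /= ?orbF ?orFb !negb_or.
rewrite x12 (eq_sym y2) y12 !xy // (eq_sym l) h2l ll' (eq_sym l h1) h1l h2l' (eq_sym h2) h12.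
by rewrite (eq_sym l') h1l'.
Qed.

Lemma point_of_sub_line l p : l \in SL -> I p l -> p \in SP.
Proof.
move=> lS pl; have/eqP full_line : [set q in SP | I q l] == [set q in [set: P] | I q l].
  rewrite eqEcard line_size sub_line_size // leqnn andbT.
  by apply/subsetP => q; rewrite !inE => /andP[].
have : p \in [set q in [set: P] | I q l] by rewrite !inE.
by rewrite -full_line inE => /andP[].
Qed.

Lemma outer_line_sub_point_unique l p p' :
  l \notin SL -> p \in SP -> p' \in SP -> I p l -> I p' l -> p = p'.
Proof.
move=> lS pS p'S pl p'l; apply/eqP; apply: contraT => pp'.
have /card_gt0P[l2] : 0 < #|[set l in SL | I p l]| by rewrite sub_point_deg.
rewrite inE => /andP[l2S pl2].
have [p'l2 | p'l2] := boolP (I p' l2).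
  by move: lS; rewrite (line_unique pp' pl p'l pl2 p'l2) l2S.
have [q [l3 [qS l3S ql2 p'l3 ql3]]] := gq_proj_exists gq_sub p'S l2S p'l2.
have qp := proj_unique p'l2 p'l3 ql3 ql2 p'l pl pl2.
by move: lS; rewrite qp in ql3; rewrite (line_unique pp' pl p'l ql3 p'l3) l3S.
Qed.

Lemma outer_line_meets_sub l : t <= s * t' -> l \notin SL -> exists2 p, p \in SP & I p l.
Proof.
move=> le_t lS; apply/exists_inP; apply: contraT => /exists_inPn missed.
(* Every point of SP then lies on a line meeting l, and such a line carries at most one
   point of SP, so #|SP| <= (s+1) t < (s+1) (s t' + 1). *)
set H := lines_meeting I [set: P] [set: L] l.
have covered x : x \in SP -> 0 < #|[set h in H | I x h]|.
  move=> xS; have [y [h [yl xh yh]]] := proj_exists (missed x xS).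
  apply/card_gt0P; exists h; rewrite !inE xh andbT /=; apply/andP; split.
    by apply: contraNneq (missed x xS) => <-.
  by apply/exists_inP; exists y; rewrite ?in_setT ?yl.
have sparse h : h \in H -> #|[set x in SP | I x h]| <= 1.
  rewrite inE => /and3P[_ _ /exists_inP[q _ /andP[ql qh]]].
  have qS : q \notin SP by apply: contraL ql; apply: missed.
  have hS : h \notin SL by apply: contra qS => hS; apply: point_of_sub_line hS qh.
  apply/card_le1_eqP => x y; rewrite !inE => /andP[xS xh] /andP[yS yh].
  exact: outer_line_sub_point_unique hS yS xS yh xh.
have : #|SP| <= #|H|.
  rewrite -!sum1_card; apply: leq_trans (leq_sum _ covered) _.
  by rewrite double_count; apply: leq_sum _ sparse.
by rewrite (card_gq_points gqS) (card_lines_meeting gqI (in_setT l)); nia.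
Qed.

Lemma card_outer_line_points l :
  t <= s * t' -> l \notin SL -> #|[set p in ~: SP | I p l]| = s.
Proof.
move=> le_t lS; have [z zS zl] := outer_line_meets_sub le_t lS.
have on_sub : [set p in [set: P] | I p l] :&: SP = [set z].
  apply/setP => p; rewrite !inE andbC.
  apply/andP/eqP => [[pS pl] | ->]; last by rewrite zS zl.
  exact: outer_line_sub_point_unique lS pS zS pl zl.
have off_sub : [set p in [set: P] | I p l] :\: SP = [set p in ~: SP | I p l].
  by apply/setP => p; rewrite !inE andbC.
move: (cardsID SP [set p in [set: P] | I p l]).
by rewrite on_sub off_sub cards1 line_size => -[].
Qed.

Lemma card_outer_point_lines p : p \notin SP -> #|[set l in ~: SL | I p l]| = t.+1.
Proof.
move=> pS; rewrite -(point_deg p); apply: eq_card => l; rewrite !inE andb_idl // => pl.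
by apply: contra pS => lS; apply: point_of_sub_line lS pl.
Qed.

Lemma exists_outer_line p : t' < t -> p \in SP -> exists2 l, l \notin SL & I p l.
Proof.
move=> lt_t' pS; have : ~~ ([set l in [set: L] | I p l] \subset [set l in SL | I p l]).
  by apply/negP => /subset_leq_card; rewrite point_deg sub_point_deg // ltnS leqNgt lt_t'.
by case/subsetPn => l; rewrite !inE /= => pl; rewrite pl andbT => lS; exists l.
Qed.

Lemma outer_octagon : 1 < s -> t' < t -> t <= s * t' ->
  exists c, is_cycle_in (levi I) (levi_verts (~: SP) (~: SL)) c /\ size c = 8.
Proof.
move=> gt1_s lt_t' le_t; have [g gS] := gq_line_exists gqS.
have /card_gt1P[z [z' [+ + zz']]] : 1 < #|[set p in SP | I p g]|.
  by rewrite sub_line_size // ltnS ltnW.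
rewrite !inE => /andP[zS zg] /andP[z'S z'g].
have [l lS zl] := exists_outer_line lt_t' zS.
have [l' l'S z'l'] := exists_outer_line lt_t' z'S.
have z'l : ~~ I z' l by apply: contraNN lS => z'l; rewrite (line_unique zz' zl z'l zg z'g).
have disj w : I w l -> ~~ I w l'.
  move=> wl; apply: contraNN l'S => wl'.
  have zw := proj_unique z'l z'g zg zl z'l' wl' wl; rewrite -zw in wl'.
  by rewrite (line_unique zz' wl' z'l' zg z'g).
have project x : x \notin SP -> I x l ->
    exists y h, [/\ y \notin SP, h \notin SL, I y l', I x h & I y h].
  move=> xS xl; have [y [h [yl' xh yh]]] := proj_exists (disj x xl).
  exists y, h; split=> //; last by apply: contra xS => hS; apply: point_of_sub_line hS xh.
  apply: contra xS => yS; rewrite (outer_line_sub_point_unique l'S yS z'S yl' z'l') in yh.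
  by rewrite -(proj_unique z'l z'g zg zl yh xh xl).
have /card_gt1P[x1 [x2 [+ + x12]]] : 1 < #|[set p in ~: SP | I p l]|.
  by rewrite card_outer_line_points.
rewrite !inE => /andP[x1S x1l] /andP[x2S x2l].
have [y1 [h1 [y1S h1S y1l' x1h1 y1h1]]] := project x1 x1S x1l.
have [y2 [h2 [y2S h2S y2l' x2h2 y2h2]]] := project x2 x2S x2l.
have /andP[uniq_c cycle_c] := gq_octagon disj x12 x1l x2l y1l' y2l' x1h1 y1h1 x2h2 y2h2.
exists [:: inl x1; inr l; inl x2; inr h2; inl y2; inr l'; inl y1; inr h1]; split=> //.
split=> //; rewrite /= !mem_levi_verts !inE.
by rewrite x1S x2S y1S y2S lS l'S h1S h2S.
Qed.

Lemma outer_biregular : 1 < s -> t' < t -> t <= s * t' ->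
  bipartite_biregular (induced (levi I) (levi_verts (~: SP) (~: SL)))
    [set x | is_line (val x)] s t.+1 8.
Proof.
move=> gt1_s lt_t' le_t; split.
- by apply: induced_simple; split=> [[p|l] [q|l'] | [p|l]].
- by move=> [[p|l] ?] [[q|m] ?]; rewrite !inE.
- move=> [u uD]; case: u uD => [p|l] lD; rewrite inE // => _.
  have := lD; rewrite mem_levi_verts inE => lS.
  by rewrite deg_induced card_levi_nbhd_inr card_outer_line_points.
- move=> [u uD]; case: u uD => [p|l] pD; rewrite inE // => _.
  have := pD; rewrite mem_levi_verts inE => pS.
  by rewrite deg_induced card_levi_nbhd_inl card_outer_point_lines.
apply: girth_induced; split; first exact: outer_octagon.
move=> c [size_c uniq_c cycle_c _]; apply: (gq_cycle_ge8 gqT); rewrite levi_vertsTT.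
by split=> //; apply/allP => u _; apply: in_setT.
Qed.

End Subquadrangle.

Theorem mainTheorem6 (m n : nat) (hm : 2 <= m) (hn : 2 <= n) (hdiv : m %| n)
  (P L : finType) (I : P -> L -> bool) :
  gq_order I m n ->
  (exists (SP : {set P}) (SL : {set L}), gq_order_on I SP SL m (n %/ m)) ->
  exists (V : finType) (e : rel V) (A : {set V}),
    bipartite_biregular e A m n.+1 8 /\
    #|V| = (m + n + 1) * (m ^ 2 - 1) * (n %/ m).
Proof.
move=> gqI [SP [SL]]; move k_def : (n %/ m) => k gqS.
have n_eq : n = k * m by rewrite -k_def divnK.
have k_gt0 : 0 < k by move: hn; rewrite n_eq; case: (k).
pose D := levi_verts (~: SP) (~: SL).
exists {u : P + L | u \in D}, (induced (levi I) D), [set x | is_line (val x)]; split.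
  by apply: (outer_biregular gqI gqS); rewrite ?n_eq; nia.
rewrite (card_sig (fun u => u \in D)) (eq_card (B := D)) //.
rewrite card_levi_verts; move: (cardsC SP) (cardsC SL).
rewrite -[#|P|]cardsT -[#|L|]cardsT (card_gq_points gqI) (card_gq_lines gqI).
rewrite (card_gq_points gqS) (card_gq_lines gqS) n_eq.
nia.
Qed.
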